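(* Let $A=(i_1,\dots,i_a)$ be an ordered tuple of distinct elements of $I_d$, $\alpha\in\mathbb{Z}_2^{a,\mathrm{ev}}$, and $r\ge0$. Then the X-cycle $A^{(r,\alpha)}$ commutes with every $x_j$, $j\in I_d$; i.e. it lies in the centralizer $\mathcal{C}_X$ of the polynomial subalgebra of $\mathcal{G}$.
   Context: Fix a commutative ring $R$ and integers $l,d\ge1$; $I_a=\{1,\dots,a\}$. Let $\mathcal{G}$ be the $R$-superalgebra that is free as an $R$-module with basis $\{x_1^{m_1}\cdots x_d^{m_d}\,w\,c_1^{e_1}\cdots c_d^{e_d}: 0\le m_i\le l-1,\ w\in\Sigma_d,\ e_i\in\{0,1\}\}$, with multiplication determined by: the $x_i$ commute and $x_i^l=0$; $w\in\Sigma_d$ multiply as in the symmetric group (composition right to left); $c_i^2=1$, $c_ic_j=-c_jc_i$ for $i\ne j$; $wx_i=x_{w(i)}w$, $wc_i=c_{w(i)}w$; $x_ic_i=-c_ix_i$, $x_ic_j=c_jx_i$ for $i\ne j$. For an ordered tuple $A=(i_1,\dots,i_a)$ of distinct elements of $I_d$, $\sigma_A$ is the cycle $i_1\mapsto i_2\mapsto\dots\mapsto i_a\mapsto i_1$. For $\alpha\in\mathbb{Z}_2^a$: $|\alpha|=\sum_j\alpha_j$; $\mathbb{Z}_2^{a,\mathrm{ev}}$ is the set of $\alpha$ with $|\alpha|$ even; $c_\alpha(A)=c_{i_1}^{\alpha_1}\cdots c_{i_a}^{\alpha_a}$; $\epsilon^\alpha_j=\prod_{k<j}(-1)^{\alpha_k}$.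 For $r\ge0$, $\alpha\in\mathbb{Z}_2^{a,\mathrm{ev}}$: $h^\alpha_r(A)=\sum_{r_1+\dots+r_a=(a-1)(l-1)+r,\ r_j\ge0}\prod_j(\epsilon^\alpha_jx_{i_j})^{r_j}$ and $A^{(r,\alpha)}=h^\alpha_r(A)\sigma_Ac_\alpha(A)$. *)

From HB Require Import structures.
From mathcomp Require Import all_boot all_order all_algebra all_fingroup.
Set Implicit Arguments. Unset Strict Implicit. Unset Printing Implicit Defensive.
Import GRing.Theory.
Local Open Scope ring_scope.

(* The superalgebra G of the paper, over a commutative ring R, with index set
   I_d = {1..d} represented by 'I_d (shifted by one).  A basis element
   x^m w c^e is indexed by (m, w, e) with m : I_d -> {0..l-1},
   w a permutation of I_d, e : I_d -> {0,1}. *)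
Definition Bidx (d l : nat) : finType :=
  ({ffun 'I_d -> 'I_l} * {perm 'I_d} * {ffun 'I_d -> bool})%type.

Notation G R d l := {ffun Bidx d l -> R^o}.

Section Alg.
Variables (R : comPzRingType) (d l : nat).
Local Notation GG := (G R d l).
Local Notation B := (Bidx d l).

Definition Gbasis (b : B) : GG := [ffun b' => (b' == b)%:R].

Definition mkexp (m : 'I_d -> nat) : option {ffun 'I_d -> 'I_l} :=
  [pick mm : {ffun 'I_d -> 'I_l} | [forall k, val (mm k) == m k]].

(* Product of basis elements (x^m w c^e)(x^m' w' c^e') computed from the
   defining relations:
     c^e x^m' = (-1)^(sum_i e_i m'_i) x^m' c^e          (x_i c_i = -c_i x_i)
     w x^m'   = x^(m' o w^-1) w                          (w x_i = x_{w(i)} w)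
     c^e w'   = w' (w'^-1 c^e w'),  w'^-1 c^e w' = (+-) c^(e o w'),
                 the sign counting inversions of w'^-1 on the support of e
     c^f c^e' = (-1)^#{(i,j) | i > j, f_i, e'_j} c^(f xor e')
     x^m x^m'' = 0 as soon as some exponent reaches l.
   The product w w' of the paper (composition right to left) is
   (w' * w)%g in mathcomp (where (s * t) x = t (s x)). *)
Definition bprod (b b' : B) : GG :=
  let: (m, w, e) := b in
  let: (m', w', e') := b' in
  let m2 := fun k : 'I_d => (m k + m' ((w^-1)%g k))%N in
  let s1 := (\sum_(i : 'I_d) e i * m' i)%N in
  let s2 := #|[set ij : 'I_d * 'I_d | [&& (ij.1 < ij.2)%N, e ij.1, e ij.2 &
                 ((w'^-1)%g ij.2 < (w'^-1)%g ij.1)%N]]| in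
  let f := fun k : 'I_d => e (w' k) in
  let s3 := #|[set ij : 'I_d * 'I_d | [&& (ij.2 < ij.1)%N, f ij.1 & e' ij.2]]| in
  let e2 := [ffun k => f k (+) e' k] in
  match mkexp m2 with
  | Some mm => ((-1) ^+ (s1 + s2 + s3)) *: Gbasis (mm, (w' * w)%g, e2)
  | None => 0
  end.

Definition Gmul (u v : GG) : GG :=
  \sum_(b : B) \sum_(b' : B) (u b * v b') *: bprod b b'.

Definition Gone : GG :=
  if mkexp (fun _ => 0%N) is Some m0 then Gbasis (m0, 1%g, [ffun _ => false]) else 0.

(* x_j (zero when l = 1, since then x_j = x_j^l = 0) *)
Definition Gx (j : 'I_d) : GG :=
  if mkexp (fun k => (k == j) : nat) is Some m then Gbasis (m, 1%g, [ffun _ => false])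
  else 0.

Definition Gc (j : 'I_d) : GG :=
  if mkexp (fun _ => 0%N) is Some m0 then Gbasis (m0, 1%g, [ffun k => k == j]) else 0.

Definition Gperm (w : {perm 'I_d}) : GG :=
  if mkexp (fun _ => 0%N) is Some m0 then Gbasis (m0, w, [ffun _ => false]) else 0.

Definition Gpow (u : GG) (n : nat) : GG := iter n (Gmul u) Gone.

Definition Gprod (a : nat) (F : 'I_a -> GG) : GG :=
  foldr (fun j acc => Gmul (F j) acc) Gone (enum 'I_a).

Definition cycf (a : nat) (A : 'I_a -> 'I_d) (k : 'I_d) : 'I_d :=
  if [pick j | A j == k] is Some j then A (ordS j) else k.

(* (cycf A is injective whenever A is; the fallback 1 is never used then) *)
Definition sigmaA (a : nat) (A : 'I_a -> 'I_d) : {perm 'I_d} :=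
  match boolP (injectiveb (cycf A)) with
  | AltTrue h => perm (elimT (injectiveP _) h)
  | AltFalse _ => 1%g
  end.

Definition epsA (a : nat) (alpha : 'I_a -> bool) (j : 'I_a) : R :=
  (-1) ^+ (\sum_(k < a | (k < j)%N) alpha k)%N.

Definition hA (a : nat) (A : 'I_a -> 'I_d) (alpha : 'I_a -> bool) (r : nat) : GG :=
  let N := ((a - 1) * (l - 1) + r)%N in
  \sum_(rr : {ffun 'I_a -> 'I_N.+1} | (\sum_(j < a) (rr j : nat))%N == N)
     Gprod (fun j => Gpow (epsA alpha j *: Gx (A j)) (rr j)).

Definition calpha (a : nat) (A : 'I_a -> 'I_d) (alpha : 'I_a -> bool) : GG :=
  Gprod (fun j => if alpha j then Gc (A j) else Gone).

Definition Xcycle (a : nat) (A : 'I_a -> 'I_d) (r : nat) (alpha : 'I_a -> bool) : GG :=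
  Gmul (Gmul (hA A alpha r) (Gperm (sigmaA A))) (calpha A alpha).

End Alg.

From mathcomp Require Import all_boot all_order all_algebra all_fingroup.
From mathcomp Require Import zify.
Set Implicit Arguments. Unset Strict Implicit. Unset Printing Implicit Defensive.
Import GRing.Theory.
Local Open Scope ring_scope.

(* Write X = h sigma c with h = h^alpha_r(A), a signed sum of the monomials of total degree
   N = (a-1)(l-1) + r in x_(i_1), ..., x_(i_a).  Moving x_j through c and sigma turns X x_j
   into (-1)^(alpha_k) h x_(i_(k+1)) sigma c when j = i_k, and into x_j X when j is not in A.
   Since all exponents stay below l while N + 1 > (a-1)(l-1), multiplying h by eps_k x_(i_k)
   yields every monomial of degree N + 1 exactly once, whatever k is: x_(i_k) h = eps_k h',
   with h' independent of k.  Both sides thus become h' sigma c, with the scalars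
   (-1)^(alpha_k) eps_(k+1) and eps_k, which agree because |alpha| is even. *)

Section Cycle.
Variables (d a : nat) (A : 'I_a -> 'I_d).
Hypothesis A_inj : injective A.

Lemma cycf_A k : cycf A (A k) = A (ordS k).
Proof. by rewrite /cycf; case: pickP => [j /eqP/A_inj -> // | /(_ k)]; rewrite eqxx. Qed.

Lemma cycf_out t : t \notin codom A -> cycf A t = t.
Proof.
move=> tA; rewrite /cycf; case: pickP => // j /eqP Ajt.
by move: tA; rewrite -Ajt codom_f.
Qed.

Lemma cycf_inj : injective (cycf A).
Proof.
have cycf_codom t : (cycf A t \in codom A) = (t \in codom A).
  case: (boolP (t \in codom A)) => [/codomP[k ->]|tA]; last by rewrite cycf_out // (negbTE tA).
  by rewrite cycf_A !codom_f.
move=> t1 t2 eq12; have := cycf_codom t2; rewrite -eq12 cycf_codom.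
case: (boolP (t1 \in codom A)) => [/codomP[k1 t1E]|t1A] /esym.
  case/codomP=> k2 t2E; move: eq12; rewrite t1E t2E !cycf_A.
  by move=> /A_inj /ordS_inj ->.
by move/negbT => t2A; move: eq12; rewrite !cycf_out.
Qed.

Lemma sigmaAE : sigmaA A =1 cycf A.
Proof.
move=> t; rewrite /sigmaA.
case: {-}_ / boolP => [inj_cyc|/injectiveP[]]; [by rewrite permE | exact: cycf_inj].
Qed.

Lemma sigmaA_A k : sigmaA A (A k) = A (ordS k).
Proof. by rewrite sigmaAE cycf_A. Qed.

Lemma sigmaA_out t : t \notin codom A -> sigmaA A t = t.
Proof. by move=> tA; rewrite sigmaAE cycf_out. Qed.

Definition cliff_exp (alpha : 'I_a -> bool) : {ffun 'I_d -> bool} :=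
  [ffun t => odd (\sum_j (alpha j && (A j == t)))].

Lemma cliff_exp_A alpha k : cliff_exp alpha (A k) = alpha k.
Proof.
rewrite ffunE (bigD1 k) //= eqxx andbT big1 ?addn0 => [|i nik]; first by case: alpha.
by rewrite (inj_eq A_inj) (negbTE nik) andbF.
Qed.

Lemma cliff_exp_out alpha t : t \notin codom A -> cliff_exp alpha t = false.
Proof.
move=> tA; rewrite ffunE big1 // => i _.
by case: eqP tA => [<-|_]; rewrite ?codom_f ?andbF.
Qed.

End Cycle.

Section Signs.
Variables (R : comPzRingType) (a : nat) (alpha : 'I_a -> bool).

Lemma epsA_sqr j : epsA R alpha j ^+ 2 = 1.
Proof. exact: sqrr_sign. Qed.

(* Going once around the cycle multiplies by (-1)^|alpha|, hence the parity hypothesis. *)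
Lemma epsA_ordS k : ~~ odd (\sum_(j < a) alpha j)%N ->
  (-1) ^+ alpha k * epsA R alpha (ordS k) = epsA R alpha k.
Proof.
move=> alpha_even; rewrite /epsA.
have sum_ltS : (\sum_(i < a | (i < k.+1)%N) alpha i =
                \sum_(i < a | (i < k)%N) alpha i + alpha k)%N.
  rewrite (bigD1 k) /= ?ltnSn // addnC; congr (_ + _)%N.
  by apply: eq_bigl => i; rewrite ltnS ltn_neqAle andbC.
have [k_lt|k_last] := ltnP k.+1 a.
  have -> : (ordS k : nat) = k.+1 by rewrite /= modn_small.
  by rewrite sum_ltS exprD mulrCA -expr2 sqrr_sign mulr1.
have ka : k.+1 = a by have := ltn_ord k; lia.
have -> : (ordS k : nat) = 0%N by rewrite /= ka modnn.
rewrite big1 => [|i]; last by rewrite ltn0.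
rewrite expr0 mulr1 -signr_odd -[in RHS]signr_odd; congr (_ ^+ _).
move: alpha_even; rewrite (eq_bigl (fun i : 'I_a => (i < k.+1)%N)) => [|i].
  by rewrite sum_ltS oddD; case: (alpha k); case: odd.
by rewrite ka ltn_ord.
Qed.

End Signs.

Section Monomials.
Variables (R : comPzRingType) (d l : nat).
Local Notation GG := (G R d l).
Local Notation e0 := ([ffun _ => false] : {ffun 'I_d -> bool}).

Definition Gmono (m : 'I_d -> nat) (w : {perm 'I_d}) (e : {ffun 'I_d -> bool}) : GG :=
  if mkexp l m is Some mm then Gbasis R (mm, w, e) else 0.

Lemma mkexpP m : match mkexp (d:=d) l m with
  | Some mm => forall t, (mm t : nat) = m t
  | None => exists t, (l <= m t)%N end.
Proof.
rewrite /mkexp; case: pickP => [mm /forallP mmE t | none]; first exact/eqP/mmE.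
case: (boolP [exists t, l <= m t]%N) => [/existsP//|].
rewrite negb_exists => /forallP m_small.
have m_lt t : (m t < l)%N by rewrite ltnNge m_small.
have := none [ffun t => Ordinal (m_lt t)].
by rewrite (_ : [forall k, _] = true) //; apply/forallP => k; rewrite ffunE.
Qed.

Lemma mkexp_ext m m' : m =1 m' -> mkexp (d:=d) l m = mkexp l m'.
Proof. by move=> eq_m; apply: eq_pick => mm; apply: eq_forallb => k; rewrite eq_m. Qed.

Lemma Gmono_ext m m' w e : m =1 m' -> Gmono m w e = Gmono m' w e.
Proof. by move=> eq_m; rewrite /Gmono (mkexp_ext eq_m). Qed.

Lemma Gmono_eq0 m w e : (exists t, l <= m t)%N -> Gmono m w e = 0.
Proof.
move=> [t mt_ge]; have := mkexpP m; rewrite /Gmono; case: mkexp => // mm mmE.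
by move: (ltn_ord (mm t)); rewrite mmE ltnNge mt_ge.
Qed.

Lemma GmonoE m w e mm0 w0 e1 :
  Gmono m w e (mm0, w0, e1) =
  ([forall t, (mm0 t : nat) == m t] && (w0 == w) && (e1 == e))%:R.
Proof.
have := mkexpP m; rewrite /Gmono; case: mkexp => [mm mmE|[t mt_ge]].
  rewrite ffunE !xpair_eqE; congr (_ && _ && _)%:R.
  apply/eqP/forallP => [-> k|eq_mm]; first by rewrite mmE.
  by apply/ffunP => k; apply/val_inj; rewrite /= mmE; apply/eqP/eq_mm.
rewrite ffunE; case: (boolP [forall t, _]) => // /forallP/(_ t)/eqP mm0E.
by move: (ltn_ord (mm0 t)); rewrite mm0E ltnNge mt_ge.
Qed.

Lemma Gmul_basis b b' : Gmul (Gbasis R b) (Gbasis R b' : GG) = bprod R b b'.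
Proof.
rewrite /Gmul (bigD1 b) //= (bigD1 b') //= !ffunE !eqxx mulr1 scale1r.
rewrite big1 ?addr0 => [|b2 nb]; last by rewrite ffunE (negbTE nb) mulr0 scale0r.
rewrite big1 ?addr0 // => b1 nb; rewrite big1 // => b2 _.
by rewrite ffunE (negbTE nb) mul0r scale0r.
Qed.

Lemma GmulDl (u u' v : GG) : Gmul (u + u') v = Gmul u v + Gmul u' v.
Proof.
rewrite /Gmul -big_split; apply: eq_bigr => b _; rewrite -big_split.
by apply: eq_bigr => b' _; rewrite ffunE mulrDl scalerDl.
Qed.

Lemma GmulDr (u v v' : GG) : Gmul u (v + v') = Gmul u v + Gmul u v'.
Proof.
rewrite /Gmul -big_split; apply: eq_bigr => b _; rewrite -big_split.
by apply: eq_bigr => b' _; rewrite ffunE mulrDr scalerDl.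
Qed.

Lemma Gmul0l (v : GG) : Gmul 0 v = 0.
Proof. by rewrite /Gmul big1 // => b _; rewrite big1 // => b' _; rewrite ffunE mul0r scale0r. Qed.

Lemma Gmul0r (v : GG) : Gmul v 0 = 0.
Proof. by rewrite /Gmul big1 // => b _; rewrite big1 // => b' _; rewrite ffunE mulr0 scale0r. Qed.

Lemma GmulZl c (u v : GG) : Gmul (c *: u) v = c *: Gmul u v.
Proof.
rewrite /Gmul scaler_sumr; apply: eq_bigr => b _; rewrite scaler_sumr.
by apply: eq_bigr => b' _; rewrite ffunE scalerA; congr (_ *: _); rewrite /GRing.scale /= mulrA.
Qed.

Lemma GmulZr c (u v : GG) : Gmul u (c *: v) = c *: Gmul u v.
Proof.
rewrite /Gmul scaler_sumr; apply: eq_bigr => b _; rewrite scaler_sumr.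
by apply: eq_bigr => b' _; rewrite ffunE scalerA; congr (_ *: _); rewrite /GRing.scale /= mulrCA.
Qed.

Lemma Gmul_suml I (s : seq I) (P : pred I) (F : I -> GG) (v : GG) :
  Gmul (\sum_(i <- s | P i) F i) v = \sum_(i <- s | P i) Gmul (F i) v.
Proof.
by apply: (big_morph (fun u => Gmul u v)); [move=> u u'; rewrite GmulDl | exact: Gmul0l].
Qed.

Lemma Gmul_sumr I (s : seq I) (P : pred I) (F : I -> GG) (v : GG) :
  Gmul v (\sum_(i <- s | P i) F i) = \sum_(i <- s | P i) Gmul v (F i).
Proof. by apply: (big_morph (Gmul v)); [move=> u u'; rewrite GmulDr | exact: Gmul0r]. Qed.

(* The three sign exponents of [bprod]: moving c^e past x^m', c^e past w',
   and reordering the Clifford generators of c^(e o w') c^e'. *)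
Definition sgn_cx (e : {ffun 'I_d -> bool}) (m' : 'I_d -> nat) := (\sum_i e i * m' i)%N.
Definition sgn_cw (e : {ffun 'I_d -> bool}) (w' : {perm 'I_d}) :=
  #|[set ij : 'I_d * 'I_d | [&& (ij.1 < ij.2)%N, e ij.1, e ij.2 &
                 ((w'^-1)%g ij.2 < (w'^-1)%g ij.1)%N]]|.
Definition sgn_cc (e : {ffun 'I_d -> bool}) (w' : {perm 'I_d}) (e' : {ffun 'I_d -> bool}) :=
  #|[set ij : 'I_d * 'I_d | [&& (ij.2 < ij.1)%N, e (w' ij.1) & e' ij.2]]|.

Lemma Gmul_mono m w e m' w' e' :
  Gmul (Gmono m w e) (Gmono m' w' e') =
  (-1) ^+ (sgn_cx e m' + sgn_cw e w' + sgn_cc e w' e') *: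
     Gmono (fun k => m k + m' ((w^-1)%g k))%N (w' * w)%g [ffun k => e (w' k) (+) e' k].
Proof.
have := mkexpP m; have := mkexpP m'; rewrite {1 2}/Gmono.
case: (mkexp l m') => [mm' mm'E|[t m't_ge]]; last first.
  rewrite Gmul0r Gmono_eq0 ?scaler0 //; exists (w t); rewrite permK.
  exact: leq_trans m't_ge (leq_addl _ _).
case: (mkexp l m) => [mm mmE|[t mt_ge]]; last first.
  by rewrite Gmul0l Gmono_eq0 ?scaler0 //; exists t; apply: leq_trans mt_ge (leq_addr _ _).
rewrite Gmul_basis /bprod /=.
rewrite (mkexp_ext (m' := fun k => (m k + m' ((w^-1)%g k))%N)); last first.
  by move=> k; rewrite mmE mm'E.
rewrite /Gmono; case: mkexp => [mm2|]; last by rewrite scaler0.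
by congr (_ *: _); congr ((-1) ^+ (_ + _ + _)); apply: eq_bigr => i _; rewrite mm'E.
Qed.

Lemma sgn_cx0 m' : sgn_cx e0 m' = 0%N.
Proof. by rewrite /sgn_cx big1 // => i _; rewrite ffunE. Qed.

Lemma sgn_cx_delta e j : sgn_cx e (fun k => (k == j) : nat) = e j.
Proof.
by rewrite /sgn_cx (bigD1 j) //= eqxx muln1 big1 ?addn0 // => i /negbTE ->; rewrite muln0.
Qed.

Lemma sgn_cw0 w' : sgn_cw e0 w' = 0%N.
Proof. by apply: eq_card0 => ij; rewrite !inE !ffunE /= andbF. Qed.

Lemma sgn_cw1 e : sgn_cw e 1 = 0%N.
Proof.
apply: eq_card0 => ij; rewrite !inE invg1 !perm1.
by apply/negP => /and4P[lt12 _ _ lt21]; move: (ltn_trans lt12 lt21); rewrite ltnn.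
Qed.

Lemma sgn_cc0 w' e' : sgn_cc e0 w' e' = 0%N.
Proof. by apply: eq_card0 => ij; rewrite !inE !ffunE /= andbF. Qed.

Lemma sgn_cc1 e : sgn_cc e 1 e0 = 0%N.
Proof. by apply: eq_card0 => ij; rewrite !inE !ffunE /= !andbF. Qed.

Lemma Gmul_poly_mono m m' w' e' :
  Gmul (Gmono m 1 e0) (Gmono m' w' e') = Gmono (fun k => m k + m' k)%N w' e'.
Proof.
rewrite Gmul_mono sgn_cx0 sgn_cw0 sgn_cc0 expr0 scale1r mulg1.
have -> : [ffun k => e0 (w' k) (+) e' k] = e' by apply/ffunP => k; rewrite !ffunE.
by apply: Gmono_ext => k; rewrite invg1 perm1.
Qed.

Lemma Gmul_mono_poly m w e m' :
  Gmul (Gmono m w e) (Gmono m' 1 e0) =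
  (-1) ^+ sgn_cx e m' *: Gmono (fun k => m k + m' ((w^-1)%g k))%N w e.
Proof.
rewrite Gmul_mono sgn_cw1 sgn_cc1 !addn0 mul1g; congr (_ *: Gmono _ _ _).
by apply/ffunP => k; rewrite !ffunE perm1 addbF.
Qed.

Lemma Gmul_perm_cliff m w m' e' :
  Gmul (Gmono m w e0) (Gmono m' 1 e') = Gmono (fun k => m k + m' ((w^-1)%g k))%N w e'.
Proof.
rewrite Gmul_mono sgn_cx0 sgn_cw0 sgn_cc0 expr0 scale1r mul1g; congr Gmono.
by apply/ffunP => k; rewrite !ffunE.
Qed.

Lemma Gmul_cliff m e e' :
  Gmul (Gmono m 1 e) (Gmono (fun _ => 0%N) 1 e') =
  (-1) ^+ sgn_cc e 1 e' *: Gmono m 1 [ffun k => e k (+) e' k].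
Proof.
rewrite Gmul_mono sgn_cw1 /sgn_cx big1 => [|i _]; last by rewrite muln0.
rewrite !add0n mulg1; congr (_ *: _).
have -> : [ffun k => e ((1 : {perm 'I_d})%g k) (+) e' k] = [ffun k => e k (+) e' k].
  by apply/ffunP => k; rewrite !ffunE perm1.
by apply: Gmono_ext => k; rewrite addn0.
Qed.

Lemma GxE j : Gx R l j = Gmono (fun k => (k == j) : nat) 1 e0.
Proof. by []. Qed.

Lemma GpermE w : Gperm R l w = Gmono (fun _ => 0%N) w e0.
Proof. by []. Qed.

Lemma Gpow_scale_x c i n :
  Gpow (c *: Gx R l i) n = c ^+ n *: Gmono (fun k => n * (k == i))%N 1 e0.
Proof.
elim: n => [|n IHn].
  by rewrite expr0 scale1r; apply: Gmono_ext => k; rewrite mul0n.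
rewrite [Gpow _ _]/= -/(Gpow _ n) IHn GmulZl GmulZr scalerA -exprS GxE Gmul_poly_mono.
by congr (_ *: _); apply: Gmono_ext => k; rewrite mulSn.
Qed.

Lemma Gprod_Gpow_x a (A : 'I_a -> 'I_d) (eps : 'I_a -> R) (n : 'I_a -> nat) :
  Gprod (fun j => Gpow (eps j *: Gx R l (A j)) (n j)) =
  (\prod_j eps j ^+ n j) *: Gmono (fun t => \sum_j n j * (t == A j))%N 1 e0.
Proof.
rewrite /Gprod -big_enum; under [X in _ = _ *: X]Gmono_ext => t do rewrite -big_enum.
elim: (enum 'I_a) => [|j s IHs] /=.
  by rewrite big_nil scale1r; apply: Gmono_ext => t; rewrite big_nil.
rewrite IHs Gpow_scale_x GmulZl GmulZr Gmul_poly_mono scalerA big_cons.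
by congr (_ *: _); apply: Gmono_ext => t; rewrite big_cons.
Qed.

Lemma calphaE a (A : 'I_a -> 'I_d) (alpha : 'I_a -> bool) :
  exists n, calpha R l A alpha = (-1) ^+ n *: Gmono (fun _ => 0%N) 1 (cliff_exp A alpha).
Proof.
pose e s := [ffun t => odd (\sum_(j <- s) (alpha j && (A j == t)))] : {ffun 'I_d -> bool}.
suff [n calphaE] : exists n,
    calpha R l A alpha = (-1) ^+ n *: Gmono (fun _ => 0%N) 1 (e (enum 'I_a)).
  exists n; rewrite calphaE; congr (_ *: Gmono _ _ _).
  by apply/ffunP => t; rewrite !ffunE big_enum.
rewrite /calpha /Gprod; elim: (enum 'I_a) => [|j s [n IHs]] /=.
  by exists 0%N; rewrite expr0 scale1r; congr Gmono; apply/ffunP => t; rewrite !ffunE big_nil.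
have -> : (if alpha j then Gc R l (A j) else Gone R d l) =
    Gmono (fun _ => 0%N) 1 [ffun k => alpha j && (k == A j)].
  by case: (alpha j); congr Gmono; apply/ffunP => t; rewrite ffunE.
rewrite IHs GmulZr Gmul_cliff scalerA -exprD; eexists; congr (_ *: Gmono _ _ _).
apply/ffunP => t; rewrite !ffunE big_cons oddD eq_sym.
by case: (_ && _).
Qed.

Lemma sum_GmonoE (I : finType) (P : pred I) (F : I -> R) (M : I -> 'I_d -> nat)
    w e mm0 w0 e1 :
  (\sum_(i | P i) F i *: Gmono (M i) w e) (mm0, w0, e1) =
  ((w0 == w) && (e1 == e))%:R * \sum_(i | P i) F i * [forall t, (mm0 t : nat) == M i t]%:R.
Proof.
rewrite sum_ffunE mulr_sumr; apply: eq_bigr => i _.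
rewrite ffunE GmonoE -[(_ *: _)]/(_ * _) -andbA -mulnb natrM.
by rewrite [X in _ = X]mulrCA [X in _ = _ * X]mulrC.
Qed.

End Monomials.

Section HomogeneousSum.
Variables (R : comPzRingType) (d l a : nat) (A : 'I_a -> 'I_d).
Hypothesis A_inj : injective A.
Variable eps : 'I_a -> R.
Local Notation GG := (G R d l).

Definition expo n (rr : {ffun 'I_a -> 'I_n}) (t : 'I_d) : nat := (\sum_j rr j * (t == A j))%N.

Definition exp_on_A N (m : 'I_d -> nat) : bool :=
  [forall t, (t \notin codom A) ==> (m t == 0%N)] && (\sum_j m (A j) == N)%N.

Lemma expo_A n (rr : {ffun 'I_a -> 'I_n}) i : expo rr (A i) = rr i.
Proof.
rewrite /expo (bigD1 i) //= eqxx muln1 big1 ?addn0 // => j nji.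
by rewrite (inj_eq A_inj) eq_sym (negbTE nji) muln0.
Qed.

Lemma expo_out n (rr : {ffun 'I_a -> 'I_n}) t : t \notin codom A -> expo rr t = 0%N.
Proof.
move=> tA; rewrite /expo big1 // => j _.
by case: eqP tA => [->|_]; rewrite ?codom_f ?muln0.
Qed.

Lemma coef_hsum N (m : 'I_d -> nat) :
  \sum_(rr : {ffun 'I_a -> 'I_N.+1} | (\sum_j (rr j : nat))%N == N)
     (\prod_j eps j ^+ rr j) * [forall t, m t == expo rr t]%:R
  = (exp_on_A N m)%:R * \prod_j eps j ^+ m (A j).
Proof.
case: (boolP (exp_on_A N m)) => [/andP[/forallP m_supp /eqP m_sum]|not_on]; last first.
  rewrite mul0r big1 // => rr /eqP rr_sum.
  case: (boolP [forall t, _]) => [/forallP m_rr|]; last by rewrite mulr0.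
  case/negP: not_on; apply/andP; split.
    by apply/forallP => t; apply/implyP => tA; rewrite (eqP (m_rr t)) expo_out.
  by rewrite -rr_sum; apply/eqP/eq_bigr => j _; rewrite (eqP (m_rr (A j))) expo_A.
have m_le j : (m (A j) < N.+1)%N by rewrite ltnS -m_sum (bigD1 j) //= leq_addr.
pose rr0 : {ffun 'I_a -> 'I_N.+1} := [ffun j => Ordinal (m_le j)].
have expo_rr0 t : m t = expo rr0 t.
  case: (boolP (t \in codom A)) => [/codomP[j ->]|tA]; first by rewrite expo_A ffunE.
  by rewrite expo_out //; apply/eqP/(implyP (m_supp t)).
rewrite (bigD1 rr0) /=; last first.
  by rewrite -[X in _ == X]m_sum; apply/eqP/eq_bigr => j _; rewrite ffunE.
rewrite [X in _ + X]big1 ?addr0 => [|rr /andP[_ rr_neq]]; last first.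
  case: (boolP [forall t, _]) => [/forallP m_rr|]; last by rewrite mulr0.
  case/eqP: rr_neq; apply/ffunP => j; apply/val_inj.
  by rewrite ffunE /= -expo_A -(eqP (m_rr (A j))).
rewrite (_ : [forall t, _] = true) ?mulr1 ?mul1r; last by apply/forallP => t; rewrite -expo_rr0.
by apply: eq_bigr => j _; rewrite ffunE.
Qed.

Hypothesis eps_sqr : forall j, eps j ^+ 2 = 1.

(* As the other exponents are at most l - 1, N >= (a-1)(l-1) forces x_(A k) to occur in
   every monomial of degree N + 1: multiplying by x_(A k) hits each of them exactly once. *)
Lemma coef_shifted_hsum N k (m : 'I_d -> nat) :
  (a.-1 * l.-1 <= N)%N -> (forall t, m t < l)%N ->
  \sum_(rr : {ffun 'I_a -> 'I_N.+1} | (\sum_j (rr j : nat))%N == N)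
     (\prod_j eps j ^+ rr j) * [forall t, m t == expo rr t + (t == A k)]%:R
  = (exp_on_A N.+1 m)%:R * \prod_j eps j ^+ m (A j) * eps k.
Proof.
move=> N_ge m_lt; have [mk0|mk_pos] := posnP (m (A k)).
  rewrite big1 => [|rr _]; last first.
    rewrite (_ : [forall t, _] = false) ?mulr0 //.
    by apply/negbTE/negP => /forallP /(_ (A k)); rewrite mk0 eqxx; lia.
  suff -> : exp_on_A N.+1 m = false by rewrite !mul0r.
  apply/negbTE/negP => /andP[_ /eqP m_sum].
  have : (\sum_j m (A j) <= a.-1 * l.-1)%N.
    rewrite (bigD1 k) //= mk0 add0n; apply: leq_trans (_ : \sum_(j | j != k) l.-1 <= _)%N.
      by apply: leq_sum => j _; have := m_lt (A j); lia.
    by rewrite sum_nat_const cardC1 card_ord.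
  by rewrite m_sum; lia.
pose m1 t := (m t - (t == A k))%N.
have shiftE (rr : {ffun 'I_a -> 'I_N.+1}) :
    [forall t, m t == expo rr t + (t == A k)] = [forall t, m1 t == expo rr t].
  by apply: eq_forallb => t; rewrite /m1; case: (eqVneq t (A k)) => [->|_]; apply/eqP/eqP; lia.
rewrite (eq_bigr (fun rr : {ffun 'I_a -> 'I_N.+1} =>
    \prod_j eps j ^+ rr j * [forall t, m1 t == expo rr t]%:R)); last by move=> rr _; rewrite shiftE.
rewrite coef_hsum.
have m1E j : j != k -> m1 (A j) = m (A j).
  by move=> njk; rewrite /m1 (inj_eq A_inj) (negbTE njk) subn0.
have -> : exp_on_A N m1 = exp_on_A N.+1 m.
  rewrite /exp_on_A; congr andb.
    apply: eq_forallb => t; case: (boolP (t \in codom A)) => //= tA.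
    rewrite /m1 (_ : (t == A k) = false) ?subn0 //.
    by apply: contraNF tA => /eqP ->; apply: codom_f.
  rewrite (bigD1 k) //= [in RHS](bigD1 k) //= (eq_bigr _ m1E) /m1 eqxx subn1.
  by rewrite -[in RHS](prednK mk_pos) addSn eqSS.
have prod_m : \prod_j eps j ^+ m (A j) = (\prod_j eps j ^+ m1 (A j)) * eps k.
  rewrite (bigD1 k) //= [X in _ = X * _](bigD1 k) //= /m1 eqxx mulrAC -exprSr subn1 prednK //.
  by congr (_ * _); apply: eq_bigr => j njk; rewrite (inj_eq A_inj) (negbTE njk) subn0.
by rewrite prod_m -!mulrA -expr2 eps_sqr mulr1.
Qed.

(* h^eps(A) w c^e in the basis, indexed by the total degree N rather than by r. *)
Definition hsum N w e : GG :=
  \sum_(rr : {ffun 'I_a -> 'I_N.+1} | (\sum_j (rr j : nat))%N == N)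
     (\prod_j eps j ^+ rr j) *: Gmono R l (expo rr) w e.

Definition hsum_x N j w e : GG :=
  \sum_(rr : {ffun 'I_a -> 'I_N.+1} | (\sum_j (rr j : nat))%N == N)
     (\prod_j eps j ^+ rr j) *: Gmono R l (fun t => expo rr t + (t == j))%N w e.

Lemma Gmul_x_hsum j N w e : Gmul (Gx R l j) (hsum N w e) = hsum_x N j w e.
Proof.
rewrite Gmul_sumr; apply: eq_bigr => rr _.
rewrite GmulZr GxE Gmul_poly_mono; congr (_ *: _).
by apply: (Gmono_ext R l w e) => t; apply: addnC.
Qed.

Lemma Gmul_hsum_x j N w e :
  Gmul (hsum N w e) (Gx R l j) = (-1) ^+ e j *: hsum_x N (w j) w e.
Proof.
rewrite Gmul_suml scaler_sumr; apply: eq_bigr => rr _.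
rewrite GmulZl GxE Gmul_mono_poly sgn_cx_delta !scalerA mulrC; congr (_ *: _).
apply: (Gmono_ext R l w e) => t; congr (_ + nat_of_bool _)%N.
by apply/eqP/eqP => [<-|->]; rewrite ?permKV ?permK.
Qed.

Lemma hsum_perm_cliff N w e :
  Gmul (Gmul (hsum N 1 [ffun _ => false]) (Gperm R l w)) (Gmono R l (fun _ => 0%N) 1 e) =
  hsum N w e.
Proof.
rewrite /hsum (@Gmul_suml _ _ _ _ _ _ _ (Gperm R l w)) Gmul_suml; apply: eq_bigr => rr _.
rewrite !GmulZl GpermE Gmul_poly_mono Gmul_perm_cliff; congr (_ *: _).
by apply: (Gmono_ext R l w e) => t; rewrite !addn0.
Qed.

Lemma hsum_x_A N k w e : (a.-1 * l.-1 <= N)%N -> hsum_x N (A k) w e = eps k *: hsum N.+1 w e.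
Proof.
move=> N_ge; apply/ffunP => -[[mm0 w0] e1].
have mm0_lt t : (mm0 t < l)%N by apply: ltn_ord.
rewrite ffunE !sum_GmonoE coef_shifted_hsum // coef_hsum -[(_ *: _)]/(_ * _).
by rewrite [X in _ = X]mulrCA [eps k * _]mulrC.
Qed.

End HomogeneousSum.

Lemma Xcycle_hsum (R : comPzRingType) (l d a : nat) (A : 'I_a -> 'I_d) alpha r :
  exists kap : R, Xcycle R l A r alpha =
    kap *: hsum l A (epsA R alpha) ((a - 1) * (l - 1) + r) (sigmaA A) (cliff_exp A alpha).
Proof.
have [n calphaE] := calphaE R l A alpha.
exists ((-1) ^+ n); rewrite /Xcycle calphaE GmulZr -hsum_perm_cliff.
congr (_ *: Gmul (Gmul _ _) _).
by apply: eq_bigr => rr _; rewrite Gprod_Gpow_x.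
Qed.

Theorem mainTheorem10 (R : comPzRingType) (l d : nat) (hl : (0 < l)%N) (hd : (0 < d)%N)
  (a : nat) (ha : (0 < a)%N) (A : 'I_a -> 'I_d) (hA : injective A)
  (alpha : 'I_a -> bool) (halpha : ~~ odd (\sum_(j < a) alpha j)%N)
  (r : nat) (j : 'I_d) :
  Gmul (Xcycle R l A r alpha) (Gx R l j)
  = Gmul (Gx R l j) (Xcycle R l A r alpha).
Proof.
have [kap ->] := Xcycle_hsum R l A alpha r.
rewrite GmulZl GmulZr Gmul_hsum_x Gmul_x_hsum; congr (_ *: _).
have N_ge : (a.-1 * l.-1 <= (a - 1) * (l - 1) + r)%N by rewrite !subn1 leq_addr.
case: (boolP (j \in codom A)) => [/codomP[k ->]|jA].
  rewrite (sigmaA_A hA) (cliff_exp_A hA) !(hsum_x_A hA (epsA_sqr R alpha)) // scalerA.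
  by rewrite (epsA_ordS R k halpha).
by rewrite (sigmaA_out hA jA) (cliff_exp_out _ jA) expr0 scale1r.
Qed.
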